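(* Let $\mathfrak{X}=\mathfrak{X}_{(\Gamma_q,i_q)_q}$ be a Bourgain–Delbaen space, let $\Gamma'$ be a self-determined subset of $\Gamma$, and let $\mathfrak{X}'=\mathfrak{X}_{(\Gamma'_{q_s},i'_{q_s})_s}$ be the Bourgain–Delbaen space determined by $\Gamma'$ (as described in the context). Let $\gamma\in\Gamma'$ and assume there are a finite subset $F\subseteq\Gamma'$, scalars $(\lambda_\eta)_{\eta\in F}$ and intervals $(E_\eta)_{\eta\in F}$ of $\mathbb{N}$ such that $c_\gamma^*=\sum_{\eta\in F}\lambda_\eta e_\eta^*\circ P_{E_\eta}$ on $\mathfrak{X}$. Then, on $\mathfrak{X}'$, $c_\gamma^{\prime*}=\sum_{\eta\in F}\lambda_\eta e_\eta^*\circ P'_{E'_\eta}$, where for $\eta\in F$, $E'_\eta=\{s:q_s\in E_\eta\}$.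
   Context: Bourgain–Delbaen spaces: given a strictly increasing sequence $(\Gamma_q)_q$ of non-empty finite sets with union $\Gamma$ and linear extension operators $i_q:\ell_\infty(\Gamma_q)\to\ell_\infty(\Gamma)$ ($i_q(x)|_{\Gamma_q}=x$) with $\sup_q\|i_q\|<\infty$ that are compatible (for $p<q$, $i_p=i_q\circ r_q\circ i_p$, with $r_q$ restriction onto $\Gamma_q$), set $\Delta_1=\Gamma_1$, $\Delta_{q+1}=\Gamma_{q+1}\setminus\Gamma_q$, $d_\gamma=i_q(e_\gamma)$ for $\gamma\in\Delta_q$; $\mathfrak{X}_{(\Gamma_q,i_q)_q}$ is the closed span of $\{d_\gamma\}$ in $\ell_\infty(\Gamma)$, with FDD $M_q=\langle d_\gamma:\gamma\in\Delta_q\rangle$ and associated projections $P_E$ onto $\bigoplus_{q\in E}M_q$. $e_\gamma^*$ denotes evaluation at $\gamma$ restricted to the space, $(d_\gamma^* )$ the functionals biorthogonal to $(d_\gamma)$, and $c_\gamma^*=e_\gamma^*-d_\gamma^*$. An infinite $\Gamma'\subseteq\Gamma$ is self-determined if each $d_\gamma^*$, $\gamma\in\Gamma'$, lies in the span of $\{e_\eta^*:\eta\in\Gamma'\}$. For such $\Gamma'$: $\{q:\Gamma'\cap\Delta_q\neq\varnothing\}=\{q_0<q_1<\cdots\}$ (indices $s=0,1,2,\dots$), $\Gamma'_q=\Gamma'\cap\Gamma_q$, $R$ = restriction onto $\Gamma'$, $i'_{q_s}(x)=R(i_{q_s}(x))$ for $x\in\ell_\infty(\Gamma'_{q_s})$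 (extended by zero); $(\Gamma'_{q_s},i'_{q_s})_s$ defines the Bourgain–Delbaen space $\mathfrak{X}'$ with basis vectors $d'_\gamma$ ($\gamma\in\Gamma'$), biorthogonal functionals $d_\gamma^{\prime*}$, $c_\gamma^{\prime*}=e_\gamma^*-d_\gamma^{\prime*}$, FDD $M'_s=\langle d'_\gamma:\gamma\in\Gamma'\cap\Delta_{q_s}\rangle$ and associated projections $P'_{E'}$ onto $\bigoplus_{s\in E'}M'_s$. *)

From HB Require Import structures.
From mathcomp Require Import all_boot all_order all_algebra.
From mathcomp Require Import finmap.
From mathcomp Require Import all_classical all_reals all_analysis.
Set Implicit Arguments. Unset Strict Implicit. Unset Printing Implicit Defensive.
Import Order.TTheory GRing.Theory Num.Theory.
Local Open Scope ring_scope.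

Section BD.
Variables (R : realType) (G : choiceType).

(* Vectors of l_oo(Gamma) are modelled as functions G -> R; an element of
   l_oo(Gamma_q) is a function vanishing off Gamma_q. *)
Definition restr (A : {fset G}) (x : G -> R) : G -> R :=
  fun t => if t \in A then x t else 0.

Definition restrp (P : pred G) (x : G -> R) : G -> R :=
  fun t => if P t then x t else 0.

Definition unitv (g : G) : G -> R := fun t => if t == g then 1 else 0.

Definition supnorm_on (A : {fset G}) (x : G -> R) : R :=
  \big[Num.max/0]_(t <- A) `|x t|.

(* (Gq, iq) is a Bourgain-Delbaen system; indices q start at 0 here. *)
Definition BD_system (Gq : nat -> {fset G})
    (iq : nat -> (G -> R) -> (G -> R)) : Prop :=
  [/\ Gq 0%N != fset0,
      (forall q, fproper (Gq q) (Gq q.+1)),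
      (forall g, exists q, g \in Gq q) &
      (forall q (c : R) x y,
         iq q (fun t => c * x t + y t) = (fun t => c * iq q x t + iq q y t))] /\
  [/\ (forall q x, iq q x = iq q (restr (Gq q) x)),
      (forall q x g, g \in Gq q -> iq q x g = x g),
      (exists C : R, forall q x g, `|iq q x g| <= C * supnorm_on (Gq q) x)
    & (forall p q x, (p < q)%N -> iq p x = iq q (restr (Gq q) (iq p x)))].

Variables (Gq : nat -> {fset G}) (iq : nat -> (G -> R) -> (G -> R)).

Definition Delta (q : nat) : {fset G} :=
  if q is q'.+1 then (Gq q'.+1 `\` Gq q')%fset else Gq 0%N.

(* d_gamma = i_q(e_gamma) for gamma in Delta_q *)
Definition dvec (q : nat) (g : G) : G -> R := iq q (unitv g).

Definition psum (a : G -> R) (N : nat) : G -> R :=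
  fun t => \sum_(q < N) \sum_(g <- Delta q) a g * dvec q g t.

(* x lies in the closed (sup-norm) span of the d_gamma *)
Definition in_X (x : G -> R) : Prop :=
  (exists C : R, forall t, `|x t| <= C) /\
  forall e : R, 0 < e -> exists N b, forall t, `|psum b N t - x t| <= e.

(* a is the coefficient family of x w.r.t. the FDD (M_q): the series
   sum_q sum_{gamma in Delta_q} a_gamma d_gamma converges to x in sup norm.
   Then d_gamma^*(x) = a_gamma. *)
Definition expansion (x a : G -> R) : Prop :=
  forall e : R, 0 < e -> exists N0, forall N, (N0 <= N)%N ->
    forall t, `|psum a N t - x t| <= e.

(* functionals on X, given through a vector x and its FDD coefficients a *)
Definition functional := (G -> R) -> (G -> R) -> R.

Definition estar (g : G) : functional := fun x _ => x g.
Definition dstar (g : G) : functional := fun _ a => a g.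
Definition cstar (g : G) : functional := fun x a => estar g x a - dstar g x a.

(* e_eta^* o P_E, where P_E x = sum_{q in E} sum_{gamma in Delta_q} a_gamma d_gamma *)
Definition eP_star (h : G) (E : pred nat) : functional := fun _ a =>
  limn (fun N => \sum_(q < N | E q) \sum_(g <- Delta q) a g * dvec q g h).

Definition eq_on_X (f h : functional) : Prop :=
  forall x a, in_X x -> expansion x a -> f x a = h x a.

End BD.

Definition nat_interval (E : pred nat) : Prop :=
  forall a b c, (a <= b <= c)%N -> E a -> E c -> E b.

Definition self_determined (R : realType) (G : choiceType)
    (Gq : nat -> {fset G}) (iq : nat -> (G -> R) -> (G -> R)) (G' : pred G) : Prop :=
  ~ (exists s : seq G, forall g, G' g -> g \in s) /\
  forall g, G' g -> exists (H : {fset G}) (mu : G -> R),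
    {subset H <= G'} /\
    eq_on_X Gq iq (dstar (R:=R) g) (fun x a => \sum_(h <- H) mu h * x h).

Definition enumerates (qs : nat -> nat) (P : nat -> Prop) : Prop :=
  (forall s, (qs s < qs s.+1)%N) /\ (forall q, P q <-> exists s, qs s = q).

Definition Gprime (G : choiceType) (Gq : nat -> {fset G}) (G' : pred G)
    (qs : nat -> nat) (s : nat) : {fset G} :=
  [fset g in Gq (qs s) | G' g]%fset.

Definition iprime (R : realType) (G : choiceType) (Gq : nat -> {fset G})
    (iq : nat -> (G -> R) -> (G -> R)) (G' : pred G) (qs : nat -> nat)
    (s : nat) (x : G -> R) : G -> R :=
  restrp G' (iq (qs s) (restr (Gprime Gq G' qs s) x)).

From HB Require Import structures.
From mathcomp Require Import all_boot all_order all_algebra.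
From mathcomp Require Import finmap.
From mathcomp Require Import all_classical all_reals all_analysis.
From mathcomp Require Import zify.
Import Order.TTheory GRing.Theory Num.Theory.
Import numFieldNormedType.Exports.
Local Open Scope classical_set_scope.
Local Open Scope ring_scope.
Set Implicit Arguments. Unset Strict Implicit.

(* A vector x of X' with FDD coefficients a is the limit of its partial sums
   P'_[0,N) x.  Extending the coefficients of P'_[0,N) x by zero off
   Γ' ∩ (Δ_{q_0} ∪ … ∪ Δ_{q_{N-1}}) gives a finitely supported vector y_N of X;
   since d'_γ is the restriction of d_γ to Γ', every partial sum P_E y_N agrees
   on Γ' with P'_{E'} P'_[0,N) x.  The hypothesis on c_γ^*, applied to y_N,
   is therefore the required identity for P'_[0,N) x, and letting N → ∞ gives
   it for x: the limits e_η^* P'_{E'_η} x exist because each E'_η is again an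
   interval. *)

Section Levels.
Variables (G : choiceType) (Gq : nat -> {fset G}).

Lemma Delta_sub q g : g \in Delta Gq q -> g \in Gq q.
Proof. by case: q => [|q] //=; rewrite in_fsetD => /andP[]. Qed.

Lemma in_Delta q g : (g \in Delta Gq q) =
  (g \in Gq q) && (if q is q'.+1 then g \notin Gq q' else true).
Proof. by case: q => [|q] /=; rewrite ?andbT // in_fsetD andbC. Qed.

Hypothesis Gq_proper : forall q, fproper (Gq q) (Gq q.+1).

Lemma Gq_sub p q : (p <= q)%N -> fsubset (Gq p) (Gq q).
Proof.
move=> /subnK <-; elim: (q - p)%N => [|k IH]; first exact: fsubset_refl.
by rewrite addSn; apply: fsubset_trans IH (fproper_sub (Gq_proper _)).
Qed.

Lemma mem_Gq_Delta p q g : g \in Delta Gq p -> (g \in Gq q) = (p <= q)%N.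
Proof.
move=> gp; have [pq|qp] := leqP p q; first by rewrite (fsubsetP (Gq_sub pq)) ?Delta_sub.
apply/negbTE; case: p gp qp => // p; rewrite in_Delta => /andP[_ gp] qp.
by apply: contra gp; apply/fsubsetP/Gq_sub; rewrite -ltnS.
Qed.

Lemma mem_Delta p q g : g \in Delta Gq p -> (g \in Delta Gq q) = (p == q).
Proof.
move=> gp; apply/idP/eqP => [gq|<-//].
by apply/eqP; rewrite eqn_leq -(mem_Gq_Delta _ gp) -(mem_Gq_Delta _ gq) !Delta_sub.
Qed.

Lemma exists_Delta g : (exists q, g \in Gq q) -> exists q, g \in Delta Gq q.
Proof.
move=> gq; have [m gm m_min] := ex_minnP gq; exists m; rewrite in_Delta gm.
by case: m gm m_min => // m _ m_min; apply/negP => /m_min; rewrite ltnn.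
Qed.

End Levels.

Section Sums.
Variable R : realType.

Lemma sum_ord_inj_reindex (P : pred nat) (F : nat -> R) (f : nat -> nat) N n :
  injective f -> (forall s, (s < N)%N -> (f s < n)%N) ->
  (forall q, (forall s, (s < N)%N -> f s != q) -> F q = 0) ->
  \sum_(q < n | P q) F q = \sum_(s < N | P (f s)) F (f s).
Proof.
move=> f_inj f_lt F0; rewrite -(big_mkord P F).
set img := map f (index_iota 0%N N).
have -> : \sum_(s < N | P (f s)) F (f s) = \sum_(q <- img | P q) F q.
  by rewrite big_map big_mkord.
rewrite (bigID (mem img)) /= [X in _ + X]big1 ?addr0 => [|q /andP[_ img'q]]; last first.
  apply: F0 => s sN; apply: contraNneq img'q => <-.
  by apply: map_f; rewrite mem_index_iota.
rewrite -big_filter -[RHS]big_filter; apply/perm_big/uniq_perm.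
- exact/filter_uniq/iota_uniq.
- by rewrite filter_uniq // map_inj_uniq ?iota_uniq.
move=> q; rewrite !mem_filter mem_index_iota andb_idr // => /andP[_ /mapP[s]].
by rewrite mem_index_iota => /andP[_ /f_lt] ? ->.
Qed.

Lemma nat_interval_homo (E : pred nat) (f : nat -> nat) :
  {homo f : s t / (s <= t)%N} -> nat_interval E -> nat_interval (fun s => E (f s)).
Proof. by move=> f_homo Eint a b c /andP[ab bc]; apply: Eint; rewrite !f_homo. Qed.

Lemma is_cvg_sum_interval (u : nat -> R) (E : pred nat) :
  nat_interval E -> cvg ((fun N => \sum_(s < N) u s) @ \oo) ->
  cvg ((fun N => \sum_(s < N | E s) u s) @ \oo).
Proof.
move=> Eint cvg_u.
have [[m Em]|E_unbounded] := pselect (exists m, forall s, (m <= s)%N -> ~~ E s).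
  apply: (is_cvg_near_cst (\sum_(s < m | E s) u s)); near=> N.
  have mN : (m <= N)%N by near: N; exact: nbhs_infty_ge.
  rewrite (big_ord_widen_cond _ _ _ mN); apply: eq_bigl => s.
  by rewrite andb_idr // => Es; rewrite ltnNge; apply: contraTN Es; exact: Em.
have [m0 Em0] : exists m0, E m0.
  apply: contrapT => noE; apply: E_unbounded; exists 0%N => s _.
  by apply/negP => Es; apply: noE; exists s.
have E_ge n : (m0 <= n)%N -> E n.
  move=> m0n; apply: contrapT => En; apply: E_unbounded; exists n.+1.
  move=> s ns; apply/negP => Es; apply: En.
  by apply: (Eint m0 n s); rewrite ?m0n ?(ltnW ns).
pose c := \sum_(s < m0 | E s) u s - \sum_(s < m0) u s.
have eq_shift : {near \oo, (fun N => c + \sum_(s < N) u s) =1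
                            (fun N => \sum_(s < N | E s) u s)}.
  near=> N; have m0N : (m0 <= N)%N by near: N; exact: nbhs_infty_ge.
  rewrite -(big_mkord E u) -(big_mkord xpredT u).
  rewrite !(big_cat_nat (n := m0) (leq0n m0) m0N) /= !big_mkord addrA subrK.
  by congr (_ + _); rewrite [RHS]big_mkcond; apply: eq_big_nat => s /andP[/E_ge ->].
apply: (cvgP (c + lim ((fun N => \sum_(s < N) u s) @ \oo))).
by apply: cvg_trans (near_eq_cvg eq_shift) _; apply: cvgD => //; exact: cvg_cst.
Unshelve. all: by end_near.
Qed.

End Sums.

Section BDspace.
Variables (R : realType) (G : choiceType).
Variables (Gq : nat -> {fset G}) (iq : nat -> (G -> R) -> (G -> R)).

Definition fdd_block (a : G -> R) (t : G) (q : nat) : R :=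
  \sum_(g <- Delta Gq q) a g * dvec iq q g t.

Definition psum_on (P : pred nat) (a : G -> R) (N : nat) (t : G) : R :=
  \sum_(q < N | P q) fdd_block a t q.

Lemma cvg_psum_expansion x a t :
  expansion Gq iq x a -> (fun N => psum_on xpredT a N t) @ \oo --> x t.
Proof.
move=> xa; apply/cvgrPdist_le => e e0; have [N0 xaN0] := xa e e0.
by exists N0 => // N /= N0N; rewrite distrC; exact: xaN0.
Qed.

Lemma psum_on_stable P a n m t :
  (forall q g, (n <= q)%N -> g \in Delta Gq q -> a g = 0) -> (n <= m)%N ->
  psum_on P a m t = psum_on P a n t.
Proof.
move=> a0 nm; rewrite /psum_on -!big_mkord (big_cat_nat (n := n) (leq0n n) nm) /=.
rewrite [X in _ + X]big1_seq ?addr0 // => q /andP[_]; rewrite mem_index_iota.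
move=> /andP[nq _]; rewrite /fdd_block big1_seq // => g /andP[_ gq].
by rewrite (a0 q) ?mul0r.
Qed.

Lemma expansion_psum a n :
  (forall q g, (n <= q)%N -> g \in Delta Gq q -> a g = 0) ->
  expansion Gq iq (psum Gq iq a n) a.
Proof.
move=> a0 e e0; exists n => N nN t.
by rewrite [psum _ _ _ _ _](@psum_on_stable xpredT a n N t a0 nN) subrr normr0 ltW.
Qed.

Hypothesis iq_bounded :
  exists C : R, forall q x g, `|iq q x g| <= C * supnorm_on (Gq q) x.

Lemma in_X_psum a n : in_X Gq iq (psum Gq iq a n).
Proof.
have [C iqC] := iq_bounded.
split; last by move=> e e0; exists n, a => t; rewrite subrr normr0 ltW.
exists (\sum_(q < n) \sum_(g <- Delta Gq q) `|a g| * `|C * supnorm_on (Gq q) (unitv R g)|).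
move=> t; apply: le_trans (ler_norm_sum _ _ _) _; apply: ler_sum => q _.
apply: le_trans (ler_norm_sum _ _ _) _; apply: ler_sum => g _.
by rewrite normrM ler_wpM2l // (le_trans (iqC _ _ _)) ?ler_norm.
Qed.

End BDspace.

Section Subsystem.
Variables (R : realType) (G : choiceType).
Variables (Gq : nat -> {fset G}) (iq : nat -> (G -> R) -> (G -> R)).
Hypothesis Gq_proper : forall q, fproper (Gq q) (Gq q.+1).
Hypothesis Gq_cover : forall g, exists q, g \in Gq q.
Variables (G' : pred G) (qs : nat -> nat).
Hypothesis qs_incr : forall s, (qs s < qs s.+1)%N.
Hypothesis qs_onto : forall q g, g \in Delta Gq q -> G' g -> exists s, qs s = q.

Local Notation Gp := (Gprime Gq G' qs).
Local Notation ip := (iprime Gq iq G' qs).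

Lemma qs_mono : {mono qs : s t / (s <= t)%N}.
Proof. by apply: leq_mono; apply: homo_ltn qs_incr; exact: ltn_trans. Qed.

Lemma qs_inj : injective qs.
Proof. exact: incn_inj qs_mono. Qed.

Lemma mem_Gprime s g : (g \in Gp s) = (g \in Gq (qs s)) && G' g.
Proof. by rewrite !inE. Qed.

Lemma Delta_Gprime s g : (g \in Delta Gp s) = (g \in Delta Gq (qs s)) && G' g.
Proof.
have [G'g|G'g] := boolP (G' g); last first.
  by rewrite andbF; apply/negP => /Delta_sub; rewrite mem_Gprime (negbTE G'g) andbF.
have [p gp] := exists_Delta (Gq_cover g).
have [t qt] := qs_onto gp G'g; subst p.
rewrite andbT (mem_Delta Gq_proper _ gp) (inj_eq qs_inj) in_Delta.
case: s => [|s]; rewrite !mem_Gprime G'g !andbT;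
  by rewrite !(mem_Gq_Delta Gq_proper _ gp) !qs_mono; lia.
Qed.

Lemma dvec_iprime s g t : g \in Gp s -> G' t -> dvec ip s g t = dvec iq (qs s) g t.
Proof.
move=> gs G't; rewrite /dvec /iprime /restrp G't; congr (iq _ _ t).
apply: funext => u; rewrite /restr /unitv; case: ifP => // /negbT.
by case: eqP => // ->; rewrite gs.
Qed.

Definition coef_lift (N : nat) (a : G -> R) (g : G) : R :=
  if has (fun s => g \in Delta Gp s) (iota 0 N) then a g else 0.

Lemma coef_lift_eq0 N a q g : g \in Delta Gq q ->
  (forall s, (s < N)%N -> qs s != q) -> coef_lift N a g = 0.
Proof.
move=> gq qs_ne; rewrite /coef_lift; case: hasP => // -[s].
rewrite mem_iota add0n => /andP[_ sN]; rewrite Delta_Gprime => /andP[gs _].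
by move: (qs_ne s sN); rewrite -(mem_Delta Gq_proper _ gs) gq.
Qed.

Lemma coef_lift_Delta N a s g : (s < N)%N -> g \in Delta Gq (qs s) ->
  coef_lift N a g = if G' g then a g else 0.
Proof.
move=> sN gs; rewrite /coef_lift; have [G'g|G'g] := boolP (G' g).
  by case: hasP => // -[]; exists s; rewrite ?mem_iota ?Delta_Gprime ?gs.
by case: hasP => // -[s' _]; rewrite Delta_Gprime (negbTE G'g) andbF.
Qed.

Lemma psum_on_lift P N a t : G' t ->
  psum_on Gq iq P (coef_lift N a) (qs N) t = psum_on Gp ip (fun s => P (qs s)) a N t.
Proof.
move=> G't; rewrite /psum_on (sum_ord_inj_reindex P (N := N) qs_inj) /fdd_block.
- apply: eq_bigr => s _.
  transitivity (\sum_(g <- Delta Gq (qs s) | G' g) a g * dvec iq (qs s) g t).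
    rewrite [RHS]big_mkcond; apply: eq_big_seq => g gs.
    by rewrite (coef_lift_Delta _ (ltn_ord s) gs); case: (G' g); rewrite ?mul0r.
  symmetry; apply: eq_fbig_cond => [g|g gs _]; first by rewrite !inE Delta_Gprime andbT.
  by rewrite dvec_iprime // Delta_sub.
- by move=> s sN; rewrite ltnNge qs_mono -ltnNge.
- move=> q qs_ne; rewrite big1_seq // => g /andP[_ gq].
  by rewrite (coef_lift_eq0 _ gq qs_ne) mul0r.
Qed.

Lemma coef_lift_ge N a q g : (qs N <= q)%N -> g \in Delta Gq q -> coef_lift N a g = 0.
Proof.
move=> Nq gq; apply: (coef_lift_eq0 a gq) => s sN; apply/eqP => qsq.
by move: Nq; rewrite -qsq qs_mono leqNgt sN.
Qed.

Section CstarIdentity.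
Hypothesis iq_bounded :
  exists C : R, forall q x g, `|iq q x g| <= C * supnorm_on (Gq q) x.
Variables (g : G) (F : {fset G}) (lam : G -> R) (E : G -> pred nat).
Hypothesis F_sub : {subset F <= G'}.
Hypothesis cstar_eq : eq_on_X Gq iq (cstar (R:=R) g)
  (fun x a => \sum_(h <- F) lam h * eP_star Gq iq h (E h) x a).

Lemma cstar_Gprime_eq_psum N a s0 : g \in Delta Gp s0 -> (s0 < N)%N ->
  psum_on Gp ip xpredT a N g - a g =
  \sum_(h <- F) lam h * psum_on Gp ip (fun s => E h (qs s)) a N h.
Proof.
rewrite Delta_Gprime => /andP[gqs0 G'g] s0N.
have lift0 := @coef_lift_ge N a.
have := cstar_eq (in_X_psum iq_bounded (coef_lift N a) (qs N)) (expansion_psum iq lift0).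
rewrite /cstar /estar /dstar /eP_star.
rewrite [psum _ _ _ _ _](psum_on_lift xpredT N a G'g) (coef_lift_Delta _ s0N gqs0) G'g.
move=> ->; apply: eq_big_seq => h hF; congr (_ * _).
rewrite -(psum_on_lift _ _ _ (F_sub hF)); apply: lim_near_cst => //; near=> n.
by apply: (psum_on_stable iq _ _ lift0); near: n; exact: nbhs_infty_ge.
Unshelve. all: by end_near.
Qed.

Hypothesis E_interval : forall h, h \in F -> nat_interval (E h).
Hypothesis G'g : G' g.

Lemma cstar_Gprime_eq :
  eq_on_X Gp ip (cstar (R:=R) g)
    (fun x a => \sum_(h <- F) lam h * eP_star Gp ip h (fun s => E h (qs s)) x a).
Proof.
have [s0 gs0] : exists s0, g \in Delta Gp s0.
  have [q gq] := exists_Delta (Gq_cover g); have [s0 qs0] := qs_onto gq G'g.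
  by exists s0; rewrite Delta_Gprime qs0 gq G'g.
move=> x a _ xa; rewrite /cstar /estar /dstar /eP_star.
pose S h N := psum_on Gp ip (fun s => E h (qs s)) a N h.
have cvg_S h : h \in F -> S h @ \oo --> limn (S h).
  move=> hF; apply: (is_cvg_sum_interval _ (cvgP _ (cvg_psum_expansion (t := h) xa))).
  by apply: nat_interval_homo (E_interval hF) => s t; rewrite qs_mono.
have cvg_rhs : (fun N => \sum_(h <- F) lam h * S h N) @ \oo -->
               \sum_(h <- F) lam h * limn (S h).
  rewrite big_seq; under eq_cvg do rewrite big_seq.
  by apply: (cvg_big add_continuous) => h hF; apply: cvgMr; exact: cvg_S.
have cvg_lhs : (fun N => psum_on Gp ip xpredT a N g - a g) @ \oo --> x g - a g.
  exact: cvgB (cvg_psum_expansion (t := g) xa) (cvg_cst (a g)).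
have eq_lhs_rhs : {near \oo, (fun N => psum_on Gp ip xpredT a N g - a g) =1
                             (fun N => \sum_(h <- F) lam h * S h N)}.
  by near=> N; apply: (cstar_Gprime_eq_psum a gs0); near: N; exact: nbhs_infty_gt.
have cvg_rhs_lhs : (fun N => \sum_(h <- F) lam h * S h N) @ \oo --> x g - a g.
  exact: cvg_trans (near_eq_cvg eq_lhs_rhs) cvg_lhs.
exact: cvg_unique cvg_rhs_lhs cvg_rhs.
Unshelve. all: by end_near.
Qed.

End CstarIdentity.

End Subsystem.

Theorem proposition1p13 (R : realType) (G : choiceType)
    (Gq : nat -> {fset G}) (iq : nat -> (G -> R) -> (G -> R))
    (HBD : BD_system Gq iq)
    (G' : pred G) (Hsd : self_determined Gq iq G')
    (qs : nat -> nat)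
    (Hqs : enumerates qs (fun q => exists g, (g \in Delta Gq q) && G' g))
    (g : G) (Hg : G' g)
    (F : {fset G}) (HF : {subset F <= G'})
    (lam : G -> R) (E : G -> pred nat)
    (HE : forall h, h \in F -> nat_interval (E h))
    (Hc : eq_on_X Gq iq (cstar (R:=R) g)
            (fun x a => \sum_(h <- F) lam h * eP_star Gq iq h (E h) x a)) :
  eq_on_X (Gprime Gq G' qs) (iprime Gq iq G' qs) (cstar (R:=R) g)
    (fun x a => \sum_(h <- F) lam h *
        eP_star (Gprime Gq G' qs) (iprime Gq iq G' qs) h (fun s => E h (qs s)) x a).
Proof.
have [[_ Gq_proper Gq_cover _] [_ _ iq_bounded _]] := HBD.
have [qs_incr qs_enum] := Hqs.
have qs_onto q h : h \in Delta Gq q -> G' h -> exists s, qs s = q.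
  by move=> hq G'h; apply/qs_enum; exists h; rewrite hq G'h.
exact (cstar_Gprime_eq Gq_proper Gq_cover qs_incr qs_onto iq_bounded HF Hc HE Hg).
Qed.
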